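(* Define $\mathrm{Mex}(F)=\min(\mathbb{N}_0\setminus F)$ for $F\subseteq\mathbb{N}_0$, and $a+D=\{a+d:d\in D\}$. Define triples $v(n)=(v_1(n),v_2(n),v_3(n))$, $n\ge 0$, recursively by $v(0)=(0,0,0)$ and, for $n\ge 0$, with $F_n=\{v_i(k): 0\le k\le n,\ i\in\{1,2,3\}\}$ and $D_n=\bigcup_{k=0}^{n}\{v_2(k)-v_1(k),\,v_3(k)-v_2(k),\,v_3(k)-v_1(k)\}$, \[ v_1(n+1)=\mathrm{Mex}(F_n),\quad v_2(n+1)=\mathrm{Mex}\big((v_1(n+1)+D_n)\cup\{1,\dots,v_1(n+1)\}\cup F_n\big), \] \[ v_3(n+1)=\mathrm{Mex}\big((v_2(n+1)+D_n)\cup\{1,\dots,v_2(n+1)\}\cup F_n\big). \] Then for all $i,j\in\{1,2,3\}$ with $i>j$ and all $n\ge 0$, \[ v_i(n+1)-v_j(n+1)-\big(v_i(n)-v_j(n)\big)\ge i-j. \]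
   Context: $\mathbb{N}_0$ denotes the nonnegative integers. *)

From mathcomp Require Import all_boot all_order all_algebra.
Set Implicit Arguments. Unset Strict Implicit. Unset Printing Implicit Defensive.
Import Order.TTheory GRing.Theory Num.Theory.

(* Since s has at most size s elements,
   some k <= size s is not in s, so searching 0..size s suffices and
   [mex s] is exactly min (N_0 \ s). *)
Definition mex (s : seq nat) : nat :=
  find (fun k => k \notin s) (iota 0 (size s).+1).

(* The nonnegative members of a finite set of integers, as naturals
   (so that a + D, computed in int, is intersected with N_0). *)
Definition nat_part (s : seq int) : seq nat :=
  [seq `|x|%N | x <- s & (0 <= x)%R].

Definition triple := (nat * nat * nat)%type.
Definition t1 (t : triple) : nat := t.1.1.
Definition t2 (t : triple) : nat := t.1.2.
Definition t3 (t : triple) : nat := t.2.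

Definition Fset (h : seq triple) : seq nat :=
  flatten [seq [:: t1 t; t2 t; t3 t] | t <- h].

Definition Dset (h : seq triple) : seq int :=
  flatten [seq [:: (t2 t)%:Z - (t1 t)%:Z; (t3 t)%:Z - (t2 t)%:Z;
                   (t3 t)%:Z - (t1 t)%:Z]%R | t <- h].

Definition shift (a : nat) (D : seq int) : seq int := [seq (a%:Z + d)%R | d <- D].

Definition step (h : seq triple) : triple :=
  let F := Fset h in
  let D := Dset h in
  let a := mex F in
  let b := mex (nat_part (shift a D) ++ iota 1 a ++ F) in
  let c := mex (nat_part (shift b D) ++ iota 1 b ++ F) in
  (a, b, c).

Fixpoint hist (n : nat) : seq triple :=
  match n with
  | 0 => [:: (0, 0, 0)]
  | n'.+1 => let h := hist n' in rcons h (step h)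
  end.

Definition v (n : nat) : triple := last (0, 0, 0) (hist n).

Definition vc (i n : nat) : nat :=
  match i with
  | 1 => t1 (v n)
  | 2 => t2 (v n)
  | _ => t3 (v n)
  end.

From mathcomp Require Import all_boot all_order all_algebra zify.
Import Order.TTheory GRing.Theory Num.Theory.

(* Let M be the least number missing from the gap set D_n.  The new triple
   (a, b, c) satisfies b - a >= M and c = b + M, whereas both old gaps are < M
   because D_n contains every number up to them; hence both gaps grow, and the
   outer one by at least 2.  To iterate, one carries an invariant along the
   history: F_n contains [0, v_1(n)], is bounded by v_3(n) and is 3-sparse
   above v_2(n); D_n contains [0, v_2(n) - v_1(n)] and [0, v_3(n) - v_2(n)], is
   bounded by v_3(n) - v_1(n) and is 2-sparse above both gaps.  Sparseness
   forces b - a <= M + 2, with M + 1 in D_n when b - a = M + 2, which restores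
   the interval property for the new gaps. *)

Set Implicit Arguments.
Unset Strict Implicit.
Unset Printing Implicit Defensive.

Lemma mex_notin s : mex s \notin s.
Proof.
rewrite /mex; set r := iota 0 (size s).+1.
have has_r : has (fun k => k \notin s) r.
  have : ~~ (size r <= size s) by rewrite size_iota ltnn.
  apply: contraR => /hasPn r_s; apply: uniq_leq_size (iota_uniq _ _) _.
  by move=> k /r_s; rewrite negbK.
have := nth_find 0 has_r; rewrite nth_iota // -(size_iota 0 (size s).+1).
by rewrite -has_find.
Qed.

Lemma mem_lt_mex s k : k < mex s -> k \in s.
Proof.
move=> k_lt; have k_r : k < (size s).+1.
  by apply: leq_trans k_lt _; rewrite /mex -{2}(size_iota 0 (size s).+1) find_size.
by have := before_find 0 k_lt; rewrite nth_iota // => /negbFE.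
Qed.

Lemma mex_le s k : k \notin s -> mex s <= k.
Proof. by move=> k_s; rewrite leqNgt; apply: contra k_s; apply: mem_lt_mex. Qed.

Lemma mex_ge s k : (forall x, x < k -> x \in s) -> k <= mex s.
Proof. by move=> lt_s; rewrite leqNgt; apply/negP => /lt_s; apply/negP/mex_notin. Qed.

Lemma mem_nat_part (s : seq int) (e : nat) : (e \in nat_part s) = ((e%:Z)%R \in s).
Proof.
apply/mapP/idP => [[x] | e_s]; last by exists (e%:Z)%R; rewrite ?mem_filter ?e_s.
by rewrite mem_filter => /andP[x_ge0 x_s] ->; rewrite gez0_abs.
Qed.

Lemma mem_nat_part_shift (D : seq int) (z x : nat) :
  z <= x -> (x \in nat_part (shift z D)) = (x - z \in nat_part D).
Proof.
move=> zx; rewrite !mem_nat_part; apply/mapP/idP => [[d d_D x_eq] | xz_D].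
  by have -> : ((x - z)%:Z)%R = d by lia.
by exists ((x - z)%:Z)%R => //; lia.
Qed.

Lemma mem_nat_part_gaps (D : seq int) (u w y e : nat) : u <= w -> w <= y ->
  (e \in nat_part (D ++ [:: w%:Z - u%:Z; y%:Z - w%:Z; y%:Z - u%:Z]%R))
  = [|| e \in nat_part D, e == w - u, e == y - w | e == y - u].
Proof.
move=> uw wy; have eqZ p q : p <= q -> (e%:Z == q%:Z - p%:Z)%R = (e == q - p).
  by move=> pq; apply/eqP/eqP; lia.
by rewrite !mem_nat_part mem_cat !inE -!mem_nat_part !eqZ // (leq_trans uw wy).
Qed.

Definition forbidden (F : seq nat) (D : seq int) (z : nat) : seq nat :=
  nat_part (shift z D) ++ iota 1 z ++ F.

Section Forbidden.
Variables (F : seq nat) (D : seq int) (z : nat).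
Hypothesis F0 : 0 \in F.

Lemma mem_forbidden_le x : x <= z -> x \in forbidden F D z.
Proof.
move=> xz; rewrite !mem_cat mem_iota.
case: x xz => [|x] xz; first by rewrite F0 !orbT.
by apply/or3P/Or32; rewrite add1n ltnS.
Qed.

Lemma mem_forbidden_gt x :
  z < x -> (x \in forbidden F D z) = (x - z \in nat_part D) || (x \in F).
Proof.
move=> zx; rewrite !mem_cat mem_iota mem_nat_part_shift ?(ltnW zx) //.
by rewrite add1n ltnS (leqNgt x) zx andbF.
Qed.

Lemma lt_mex_forbidden : z < mex (forbidden F D z).
Proof. by apply: mex_ge => x; rewrite ltnS; apply: mem_forbidden_le. Qed.

Lemma mex_forbidden_gap : mex (nat_part D) <= mex (forbidden F D z) - z.
Proof.
apply: mex_le; have := mex_notin (forbidden F D z).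
by rewrite mem_forbidden_gt ?lt_mex_forbidden // negb_or => /andP[].
Qed.

Lemma mex_forbidden_eq :
  0 < mex (nat_part D) -> (forall x, x \in F -> x < z + mex (nat_part D)) ->
  mex (forbidden F D z) = z + mex (nat_part D).
Proof.
move=> M_gt0 F_lt; apply/eqP; rewrite eqn_leq; apply/andP; split.
  apply: mex_le; rewrite mem_forbidden_gt; last by rewrite -{1}[z]addn0 ltn_add2l.
  rewrite addKn negb_or mex_notin /=.
  by apply/negP => /F_lt; rewrite ltnn.
have := mex_forbidden_gap; have := lt_mex_forbidden; lia.
Qed.

End Forbidden.

Definition next (F : seq nat) (D : seq int) : triple :=
  let a := mex F in let b := mex (forbidden F D a) in (a, b, mex (forbidden F D b)).

Record hist_inv (F : seq nat) (D : seq int) (t : triple) : Prop := {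
  inv_le12 : t1 t <= t2 t;
  inv_le23 : t2 t <= t3 t;
  inv_low : forall x, x <= t1 t -> x \in F;
  inv_up : forall x, x \in F -> x <= t3 t;
  inv_gap12 : forall e, e <= t2 t - t1 t -> e \in nat_part D;
  inv_gap23 : forall e, e <= t3 t - t2 t -> e \in nat_part D;
  inv_Dup : forall e, e \in nat_part D -> e <= t3 t - t1 t;
  inv_Fsparse : forall x y, x \in F -> y \in F -> t2 t < x -> x < y -> x + 3 <= y;
  inv_Dsparse : forall x y, x \in nat_part D -> y \in nat_part D ->
    t2 t - t1 t < x -> t3 t - t2 t < x -> x < y -> x + 2 <= y
}.

Section Step.
Variables (F : seq nat) (D : seq int) (t : triple).
Hypothesis I : hist_inv F D t.

Local Notation p1 := (t1 t).
Local Notation p2 := (t2 t).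
Local Notation p3 := (t3 t).
Local Notation M := (mex (nat_part D)).
Local Notation a := (mex F).
Local Notation b := (mex (forbidden F D a)).
Local Notation c := (mex (forbidden F D b)).

Let F0 : 0 \in F := inv_low I (leq0n _).

Lemma lt_t1_a : p1 < a.
Proof. by apply: mex_ge => x; rewrite ltnS; apply: (inv_low I). Qed.

Lemma lt_gap12_M : p2 - p1 < M.
Proof. by apply: mex_ge => x; rewrite ltnS; apply: (inv_gap12 I). Qed.

Lemma lt_gap23_M : p3 - p2 < M.
Proof. by apply: mex_ge => x; rewrite ltnS; apply: (inv_gap23 I). Qed.

Lemma lt_t2_aM : p2 < a + M.
Proof. by have := inv_le12 I; have := lt_t1_a; have := lt_gap12_M; lia. Qed.

Lemma lt_a_b : a < b.
Proof. exact: lt_mex_forbidden. Qed.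

Lemma le_M_gap_ab : M <= b - a.
Proof. exact: mex_forbidden_gap. Qed.

Lemma mem_F_aM : M < b - a -> a + M \in F.
Proof.
move=> M_ba; have : a + M \in forbidden F D a by apply: mem_lt_mex; lia.
have M_gt0 := lt_gap12_M.
by rewrite mem_forbidden_gt ?addKn ?(negbTE (mex_notin _)) //; lia.
Qed.

(* [a + M] lies in F, which is 3-sparse there, so [a + e] does not. *)
Lemma mem_D_gap_ab e : M < e < M + 3 -> e < b - a -> e \in nat_part D.
Proof.
move=> /andP[M_e e_M3] e_ba; have aM_F := mem_F_aM (ltn_trans M_e e_ba).
have : a + e \in forbidden F D a by apply: mem_lt_mex; lia.
rewrite mem_forbidden_gt ?addKn; last by lia.
case/orP=> // ae_F; have := inv_Fsparse I aM_F ae_F lt_t2_aM; lia.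
Qed.

Lemma gap_ab_le : b - a <= M + 2.
Proof.
rewrite leqNgt; apply/negP => gap.
have D1 : M + 1 \in nat_part D by apply: mem_D_gap_ab; lia.
have D2 : M + 2 \in nat_part D by apply: mem_D_gap_ab; lia.
have := inv_Dsparse I D1 D2; have := lt_gap12_M; have := lt_gap23_M; lia.
Qed.

Lemma c_eq : c = b + M.
Proof.
apply: (@mex_forbidden_eq F D b F0) => [|x /(inv_up I)]; first by have := lt_gap12_M; lia.
have := inv_le12 I; have := lt_t2_aM; have := le_M_gap_ab; have := lt_gap23_M; lia.
Qed.

Lemma gaps_increase : let t' := next F D in
  p2 - p1 < t2 t' - t1 t' /\ p3 - p2 < t3 t' - t2 t'.
Proof.
split; first exact: leq_trans lt_gap12_M le_M_gap_ab.
by have := lt_gap23_M; rewrite -(addKn b M) -c_eq.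
Qed.

Lemma t3_lt_c : p3 + 3 <= c.
Proof.
rewrite c_eq; have := inv_le12 I; have := inv_le23 I; have := lt_t1_a.
have := lt_gap12_M; have := lt_gap23_M; have := le_M_gap_ab; lia.
Qed.

Local Notation F' := (F ++ [:: a; b; c]).
Local Notation D' := (D ++ [:: b%:Z - a%:Z; c%:Z - b%:Z; c%:Z - a%:Z]%R).

Lemma mem_next_D (e : nat) :
  (e \in nat_part D') = [|| e \in nat_part D, e == b - a, e == c - b | e == c - a].
Proof. by rewrite mem_nat_part_gaps // ?c_eq ?leq_addr // ltnW ?lt_a_b. Qed.

Lemma next_Fup (x : nat) : x \in F' -> x <= c.
Proof.
have t3_c := t3_lt_c; have a_b := lt_a_b; rewrite c_eq mem_cat !inE in t3_c *.
by case/or4P=> [/(inv_up I)|/eqP->|/eqP->|/eqP->]; lia.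
Qed.

Lemma next_Dup (e : nat) : e \in nat_part D' -> e <= c - a.
Proof.
have le12 := inv_le12 I; have gap12 := lt_gap12_M; have gap23 := lt_gap23_M.
have M_ba := le_M_gap_ab; rewrite mem_next_D c_eq.
by case/or4P=> [/(inv_Dup I)|/eqP->|/eqP->|/eqP->]; lia.
Qed.

Lemma next_Fsparse (x y : nat) :
  x \in F' -> y \in F' -> b < x -> x < y -> x + 3 <= y.
Proof.
move=> x_F' y_F' b_x x_y; have y_le := next_Fup y_F'; have t3_c := t3_lt_c.
have a_b := lt_a_b; have b_t2 : p2 < b by have := lt_t2_aM; have := le_M_gap_ab; lia.
rewrite !mem_cat !inE in x_F' y_F'.
case/or4P: x_F' => [x_F|/eqP x_a|/eqP x_b|/eqP x_c]; try lia.
have x_t3 := inv_up I x_F.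
case/or4P: y_F' => [y_F|/eqP y_a|/eqP y_b|/eqP y_c]; try lia.
by apply: (inv_Fsparse I) x_F y_F _ x_y; lia.
Qed.

Lemma next_Dsparse (x y : nat) : x \in nat_part D' -> y \in nat_part D' ->
  b - a < x -> c - b < x -> x < y -> x + 2 <= y.
Proof.
move=> x_D' y_D' ba_x cb_x x_y; have y_le := next_Dup y_D'.
have le12 := inv_le12 I; have gap12 := lt_gap12_M; have gap23 := lt_gap23_M.
have M_ba := le_M_gap_ab; rewrite !mem_next_D c_eq in x_D' y_D' cb_x y_le.
case/or4P: x_D' => [x_D|/eqP x_ba|/eqP x_M|/eqP x_ca]; try lia.
have x_Dup := inv_Dup I x_D.
case/or4P: y_D' => [y_D|/eqP y_ba|/eqP y_M|/eqP y_ca]; try lia.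
by apply: (inv_Dsparse I) x_D y_D _ _ x_y; lia.
Qed.

Lemma hist_inv_next : hist_inv F' D' (a, b, c).
Proof.
split; rewrite /t1 /t2 /t3 /=.
- exact/ltnW/lt_a_b.
- by rewrite c_eq leq_addr.
- move=> x x_a; rewrite mem_cat; case: (ltnP x a) => [/mem_lt_mex -> // | a_x].
  by rewrite (_ : x = a) ?inE ?eqxx ?orbT //; lia.
- exact: next_Fup.
- move=> e e_ba; have ba_M2 := gap_ab_le; rewrite mem_next_D c_eq addKn.
  case: (ltngtP e M) => [/mem_lt_mex -> // | M_e | _]; last by rewrite !orbT.
  case: (ltngtP e (b - a)) => [e_ba' | ba_e | _]; [|lia|by rewrite orbT].
  by rewrite mem_D_gap_ab //; lia.
- move=> e; rewrite mem_next_D c_eq addKn.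
  by case: (ltngtP e M) => [/mem_lt_mex -> // | //= | _]; rewrite !orbT.
- exact: next_Dup.
- exact: next_Fsparse.
- exact: next_Dsparse.
Qed.

End Step.

Lemma Fset_rcons h t : Fset (rcons h t) = Fset h ++ [:: t1 t; t2 t; t3 t].
Proof. by rewrite /Fset map_rcons flatten_rcons. Qed.

Lemma Dset_rcons h t : Dset (rcons h t) = Dset h ++
  [:: (t2 t)%:Z - (t1 t)%:Z; (t3 t)%:Z - (t2 t)%:Z; (t3 t)%:Z - (t1 t)%:Z]%R.
Proof. by rewrite /Dset map_rcons flatten_rcons. Qed.

Lemma v_succ n : v n.+1 = next (Fset (hist n)) (Dset (hist n)).
Proof. by rewrite /v /= last_rcons. Qed.

Lemma hist_inv_base : hist_inv [:: 0; 0; 0] [:: 0; 0; 0]%R (0, 0, 0).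
Proof.
split; rewrite /t1 /t2 /t3 //=.
- by move=> x; rewrite leqn0 => /eqP->.
- by move=> x; rewrite !inE => /or3P[]/eqP->.
- by move=> e; rewrite leqn0 => /eqP->.
- by move=> e; rewrite leqn0 => /eqP->.
- by move=> e; rewrite mem_nat_part !inE => /or3P[]/eqP[->].
- by move=> x y; rewrite !inE => /or3P[]/eqP->.
- by move=> x y; rewrite mem_nat_part !inE => /or3P[]/eqP[->].
Qed.

Lemma hist_invP n : hist_inv (Fset (hist n)) (Dset (hist n)) (v n).
Proof.
elim: n => [|n IH]; first exact: hist_inv_base.
rewrite v_succ /= Fset_rcons Dset_rcons; exact: hist_inv_next IH.
Qed.

Theorem corollary4 :
  forall (i j : nat), (1 <= j)%N -> (j < i)%N -> (i <= 3)%N ->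
  forall n : nat,
    ((i%:Z - j%:Z)
     <= ((vc i n.+1)%:Z - (vc j n.+1)%:Z) - ((vc i n)%:Z - (vc j n)%:Z))%R.
Proof.
move=> i j j_ge1 j_i i_le3 n.
have I := hist_invP n; have I' := hist_invP n.+1; rewrite v_succ in I'.
have [gap12 gap23] := gaps_increase I.
move: (inv_le12 I) (inv_le23 I) (inv_le12 I') (inv_le23 I') gap12 gap23.
rewrite /vc v_succ.
by case: i j_i i_le3 => [|[|[|[|i]]]] //; case: j j_ge1 => [|[|[|j]]] //= *; lia.
Qed.
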